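(* Let $L_k>0$, $V_k^{\mathrm d}>0$, $R_k>0$, $t_k>0$, $V_k^{\mathrm c}>0$ and $\beta\in(0,1)$. For $\lambda_k\in[0,1]$ define \[ D_{\mathrm{comp}}^{\mathrm d}=\frac{\lambda_kL_k}{V_k^{\mathrm d}},\quad D_{\mathrm{tran}}^{\mathrm d}=\frac{\beta\lambda_kL_k}{t_kR_k},\quad D_{\mathrm{tran}}^{\mathrm c}=\frac{(1-\lambda_k)L_k}{t_kR_k},\quad D_{\mathrm{comp}}^{\mathrm c}=\frac{(1-\lambda_k)L_k}{V_k^{\mathrm c}}, \] and \[ D_k(\lambda_k)=\begin{cases}\max\{D_{\mathrm{comp}}^{\mathrm d}+D_{\mathrm{tran}}^{\mathrm d},\ D_{\mathrm{tran}}^{\mathrm c}+D_{\mathrm{comp}}^{\mathrm c}\}, & \text{if } D_{\mathrm{comp}}^{\mathrm d}\ge D_{\mathrm{tran}}^{\mathrm c},\\ D_{\mathrm{tran}}^{\mathrm c}+\max\{D_{\mathrm{tran}}^{\mathrm d},\ D_{\mathrm{comp}}^{\mathrm c}\}, & \text{if } D_{\mathrm{comp}}^{\mathrm d}< D_{\mathrm{tran}}^{\mathrm c}.\end{cases} \] Then a minimizer $\lambda_k^*$ of $D_k(\lambda_k)$ over $\lambda_k\in[0,1]$ is \[ \lambda_k^*=\begin{cases}\dfrac{V_k^{\mathrm d}(t_kR_k+V_k^{\mathrm c})}{V_k^{\mathrm d}V_k^{\mathrm c}(1+\beta)+t_kR_k(V_k^{\mathrm d}+V_k^{\mathrm c})},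 & \text{if } t_kR_k\ge\sqrt{\beta V_k^{\mathrm d}V_k^{\mathrm c}},\\[2ex] \dfrac{V_k^{\mathrm d}}{V_k^{\mathrm d}+t_kR_k}, & \text{if } t_kR_k<\sqrt{\beta V_k^{\mathrm d}V_k^{\mathrm c}}.\end{cases} \]
   Context: Partial compression offloading model: device $k$ compresses a fraction $\lambda_k$ of its $L_k$ raw bits locally at speed $V_k^{\mathrm d}$ and transmits the compressed $\beta\lambda_kL_k$ bits; the remaining $(1-\lambda_k)L_k$ raw bits are transmitted (average rate $t_kR_k$, where $t_k$ is the TDMA time fraction and $R_k$ the average channel rate) and compressed at the edge cloud with allocated speed $V_k^{\mathrm c}$; $\beta$ is the compression ratio. The channel carries only one of the two transmissions at a time, which gives the end-to-end delay $D_k(\lambda_k)$ above. *)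

From Stdlib Require Import Reals.
Open Scope R_scope.

Definition Dcomp_d (L Vd lam : R) : R := lam * L / Vd.
Definition Dtran_d (L Rk t beta lam : R) : R := beta * lam * L / (t * Rk).
Definition Dtran_c (L Rk t lam : R) : R := (1 - lam) * L / (t * Rk).
Definition Dcomp_c (L Vc lam : R) : R := (1 - lam) * L / Vc.

Definition Dk (L Vd Rk t Vc beta lam : R) : R :=
  let a := Dcomp_d L Vd lam in
  let b := Dtran_d L Rk t beta lam in
  let c := Dtran_c L Rk t lam in
  let d := Dcomp_c L Vc lam in
  if Rle_dec c a then Rmax (a + b) (c + d)
  else c + Rmax b d.

Definition lam_star (Vd Rk t Vc beta : R) : R :=
  if Rle_dec (sqrt (beta * Vd * Vc)) (t * Rk)
  then Vd * (t * Rk + Vc) / (Vd * Vc * (1 + beta) + t * Rk * (Vd + Vc))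
  else Vd / (Vd + t * Rk).

(* Let u = L/Vd, v = L/(tR) and w = L/Vc be the times to compress all bits on
   the device, transmit all raw bits, and compress all bits in the cloud; the
   four component delays are then a = λu, b = βλv, c = (1-λ)v, d = (1-λ)w.
   Whatever the case split, the delay dominates the device path
   a + b = λ(u + βv), which increases with λ, and the two decreasing
   quantities c + d = (1-λ)(v + w) (cloud path) and c + b = (1-λ)v + βλv
   (total channel occupancy).  When βv² <= uw the candidate equalises the
   device and cloud paths; otherwise the channel is the bottleneck and the
   candidate equalises device compression with raw transmission (a = c).  In
   both cases the delay there equals the increasing bound and one decreasing
   bound, hence is a global minimum. *)

From Stdlib Require Import Reals Lra Psatz.
Open Scope R_scope.

Lemma crossing_point_minimizes (g p q : R -> R) (s : R) :
  (forall x y, x <= y -> p x <= p y) ->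
  (forall x y, x <= y -> q y <= q x) ->
  (forall x, p x <= g x) -> (forall x, q x <= g x) ->
  g s <= p s -> g s <= q s ->
  forall x, g s <= g x.
Proof.
  intros p_incr q_decr p_le_g q_le_g gs_le_ps gs_le_qs x.
  destruct (Rle_dec s x) as [Hsx | Hxs].
  - specialize (p_incr s x Hsx); specialize (p_le_g x); lra.
  - assert (Hxs' : x <= s) by lra.
    specialize (q_decr x s Hxs'); specialize (q_le_g x); lra.
Qed.

Lemma ratio_in_unit_interval (n d : R) :
  0 <= n -> n <= d -> 0 < d -> 0 <= n / d <= 1.
Proof.
  intros Hn Hnd Hd; split.
  - apply Rmult_le_pos; [lra | apply Rlt_le, Rinv_0_lt_compat, Hd].
  - apply (Rmult_le_reg_r d); [exact Hd |].
    unfold Rdiv; rewrite Rmult_assoc, Rinv_l, Rmult_1_r; lra.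
Qed.

Lemma sqrt_le_iff_le_square (x T : R) :
  0 <= x -> 0 <= T -> (sqrt x <= T <-> x <= T * T).
Proof.
  intros Hx HT; split; intro H.
  - apply sqrt_le_0; [exact Hx | nra |].
    rewrite sqrt_square by exact HT; exact H.
  - rewrite <- (sqrt_square T) by exact HT; apply sqrt_le_1_alt, H.
Qed.

Definition delay (a b c d : R) : R :=
  if Rle_dec c a then Rmax (a + b) (c + d) else c + Rmax b d.

Lemma delay_ge_device_path (a b c d : R) : a + b <= delay a b c d.
Proof.
  unfold delay; destruct (Rle_dec c a).
  - apply Rmax_l.
  - pose proof (Rmax_l b d); lra.
Qed.

Lemma delay_ge_cloud_path (a b c d : R) : c + d <= delay a b c d.
Proof.
  unfold delay; destruct (Rle_dec c a).
  - apply Rmax_r.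
  - pose proof (Rmax_r b d); lra.
Qed.

Lemma delay_ge_transmission (a b c d : R) : c + b <= delay a b c d.
Proof.
  unfold delay; destruct (Rle_dec c a).
  - pose proof (Rmax_l (a + b) (c + d)); lra.
  - pose proof (Rmax_l b d); lra.
Qed.

Lemma delay_eq_device_path (a b c d : R) :
  c <= a -> c + d <= a + b -> delay a b c d = a + b.
Proof.
  intros Hca Hpaths; unfold delay; destruct (Rle_dec c a) as [_ | Hac].
  - apply Rmax_left; lra.
  - contradiction.
Qed.

Definition delay_split (u v w beta lam : R) : R :=
  delay (lam * u) (beta * lam * v) ((1 - lam) * v) ((1 - lam) * w).

Lemma Dk_as_delay_split (L Vd Rk t Vc beta lam : R) :
  Dk L Vd Rk t Vc beta lam
  = delay_split (L / Vd) (L / (t * Rk)) (L / Vc) beta lam.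
Proof.
  unfold delay_split.
  change (Dk L Vd Rk t Vc beta lam) with
    (delay (Dcomp_d L Vd lam) (Dtran_d L Rk t beta lam)
       (Dtran_c L Rk t lam) (Dcomp_c L Vc lam)).
  unfold Dcomp_d, Dtran_d, Dtran_c, Dcomp_c, Rdiv.
  f_equal; ring.
Qed.

Section SplitDelay.

Variables u v w beta : R.
Hypotheses (hu : 0 < u) (hv : 0 < v) (hw : 0 < w).
Hypotheses (hb0 : 0 < beta) (hb1 : beta < 1).

Let D := delay_split u v w beta.

Lemma device_path_increasing (x y : R) :
  x <= y -> x * u + beta * x * v <= y * u + beta * y * v.
Proof.
  intro Hxy; assert (0 <= (y - x) * (u + beta * v)) by (apply Rmult_le_pos; nra).
  nra.
Qed.

Lemma cloud_path_decreasing (x y : R) :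
  x <= y -> (1 - y) * v + (1 - y) * w <= (1 - x) * v + (1 - x) * w.
Proof. intros; nra. Qed.

Lemma transmission_decreasing (x y : R) :
  x <= y -> (1 - y) * v + beta * y * v <= (1 - x) * v + beta * x * v.
Proof.
  intro Hxy; assert (0 <= (y - x) * ((1 - beta) * v)) by (apply Rmult_le_pos; nra).
  nra.
Qed.

Lemma paths_balanced_minimizer :
  beta * v * v <= u * w ->
  let s := (v + w) / (u + beta * v + v + w) in
  0 <= s <= 1 /\ forall lam, D s <= D lam.
Proof.
  intros Hthr s.
  assert (Hbv : 0 < beta * v) by (apply Rmult_lt_0_compat; lra).
  assert (HS : 0 < u + beta * v + v + w) by lra.
  assert (Hbalance : s * u + beta * s * v = (1 - s) * v + (1 - s) * w)
    by (unfold s; field; lra).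
  assert (Hca : (1 - s) * v <= s * u).
  { assert (E : (s * u - (1 - s) * v) * (u + beta * v + v + w) = u * w - beta * v * v)
      by (unfold s; field; lra).
    nra. }
  assert (Hs : D s = s * u + beta * s * v)
    by (apply delay_eq_device_path; lra).
  split; [apply ratio_in_unit_interval; lra |].
  apply (crossing_point_minimizes D (fun x => x * u + beta * x * v)
           (fun x => (1 - x) * v + (1 - x) * w)).
  - exact device_path_increasing.
  - exact cloud_path_decreasing.
  - intro; apply delay_ge_device_path.
  - intro; apply delay_ge_cloud_path.
  - lra.
  - lra.
Qed.

Lemma channel_bottleneck_minimizer :
  u * w <= beta * v * v ->
  let s := v / (u + v) in
  0 <= s <= 1 /\ forall lam, D s <= D lam.
Proof.
  intros Hthr s.
  assert (Hca : (1 - s) * v = s * u) by (unfold s; field; lra).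
  assert (Hdb : (1 - s) * w <= beta * s * v).
  { assert (E : (beta * s * v - (1 - s) * w) * (u + v) = beta * v * v - u * w)
      by (unfold s; field; lra).
    nra. }
  assert (Hs : D s = s * u + beta * s * v)
    by (apply delay_eq_device_path; lra).
  split; [apply ratio_in_unit_interval; lra |].
  apply (crossing_point_minimizes D (fun x => x * u + beta * x * v)
           (fun x => (1 - x) * v + beta * x * v)).
  - exact device_path_increasing.
  - exact transmission_decreasing.
  - intro; apply delay_ge_device_path.
  - intro; apply delay_ge_transmission.
  - lra.
  - lra.
Qed.

End SplitDelay.

Lemma threshold_in_full_times (L Vd T Vc beta : R) :
  0 < L -> 0 < Vd -> 0 < T -> 0 < Vc -> 0 < beta ->
  (sqrt (beta * Vd * Vc) <= T <->
   beta * (L / T) * (L / T) <= (L / Vd) * (L / Vc)).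
Proof.
  intros HL HVd HT HVc Hb.
  assert (Hscale : 0 < L * L / (T * T * Vd * Vc))
    by (apply Rdiv_lt_0_compat; repeat apply Rmult_lt_0_compat; lra).
  assert (E : (L / Vd) * (L / Vc) - beta * (L / T) * (L / T)
              = L * L / (T * T * Vd * Vc) * (T * T - beta * Vd * Vc))
    by (field; lra).
  rewrite sqrt_le_iff_le_square by (try apply Rlt_le; repeat apply Rmult_lt_0_compat; lra).
  split; intro H; nra.
Qed.

Lemma lam_star_in_full_times (L Vd Rk t Vc beta : R) :
  0 < L -> 0 < Vd -> 0 < Rk -> 0 < t -> 0 < Vc -> 0 < beta ->
  lam_star Vd Rk t Vc beta
  = if Rle_dec (beta * (L / (t * Rk)) * (L / (t * Rk))) ((L / Vd) * (L / Vc))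
    then (L / (t * Rk) + L / Vc)
         / (L / Vd + beta * (L / (t * Rk)) + L / (t * Rk) + L / Vc)
    else (L / (t * Rk)) / (L / Vd + L / (t * Rk)).
Proof.
  intros HL HVd HR Ht HVc Hb.
  assert (HT : 0 < t * Rk) by (apply Rmult_lt_0_compat; lra).
  pose proof (threshold_in_full_times L Vd (t * Rk) Vc beta HL HVd HT HVc Hb) as Hthr.
  unfold lam_star.
  destruct (Rle_dec (sqrt (beta * Vd * Vc)) (t * Rk)) as [H1 | H1];
    destruct (Rle_dec _ _) as [H2 | H2]; try tauto;
    field; repeat split;
    apply Rgt_not_eq; repeat (apply Rplus_lt_0_compat || apply Rmult_lt_0_compat); lra.
Qed.

Theorem lemma1 (L Vd Rk t Vc beta : R)
  (hL : 0 < L) (hVd : 0 < Vd) (hR : 0 < Rk) (ht : 0 < t) (hVc : 0 < Vc)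
  (hb0 : 0 < beta) (hb1 : beta < 1) :
  0 <= lam_star Vd Rk t Vc beta <= 1 /\
  forall lam : R, 0 <= lam <= 1 ->
    Dk L Vd Rk t Vc beta (lam_star Vd Rk t Vc beta) <= Dk L Vd Rk t Vc beta lam.
Proof.
  rewrite (lam_star_in_full_times L) by assumption.
  assert (hu : 0 < L / Vd) by (apply Rdiv_lt_0_compat; lra).
  assert (hv : 0 < L / (t * Rk)) by (apply Rdiv_lt_0_compat; nra).
  assert (hw : 0 < L / Vc) by (apply Rdiv_lt_0_compat; lra).
  set (u := L / Vd) in *; set (v := L / (t * Rk)) in *; set (w := L / Vc) in *.
  set (s := if Rle_dec _ _ then _ else _).
  assert (Hmin : 0 <= s <= 1 /\
                 forall lam, delay_split u v w beta s <= delay_split u v w beta lam).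
  { unfold s; destruct (Rle_dec (beta * v * v) (u * w)).
    - apply paths_balanced_minimizer; lra.
    - apply channel_bottleneck_minimizer; lra. }
  destruct Hmin as [Hs Hopt]; split; [exact Hs |].
  intros lam _; rewrite !Dk_as_delay_split; apply Hopt.
Qed.
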